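(* Let $\boldsymbol{x}_p=[i_p,v_p]^{\intercal}$ be the unique $T$-periodic solution of the switched system. Then $$\int_0^{T/2}i_p(t)\,dt=\frac{C}{V_{dc}}\bigl(v_p(T/2)^2-v_p(0)^2\bigr)=C\bigl(v_p(T/2)-v_p(0)\bigr),$$ and consequently $v_p(0)+v_p(T/2)=V_{dc}$.
   Context: Let $R,L,C,V_{dc},T>0$. Let $\boldsymbol{x}(t)=[i(t),v(t)]^{\intercal}$. Define $$A_1=\begin{bmatrix}-\frac RL & -\frac1L\\ \frac1C & 0\end{bmatrix},\quad A_2=\begin{bmatrix}-\frac RL & \frac1L\\ -\frac1C & 0\end{bmatrix},\quad \boldsymbol{b}_1=\begin{bmatrix}\frac{V_{dc}}L\\ 0\end{bmatrix}.$$ The switched system on $t\ge0$ is: $\boldsymbol{x}'=A_1\boldsymbol{x}+\boldsymbol{b}_1$ on each interval $[(k-1)T,(k-1)T+\frac T2]$ and $\boldsymbol{x}'=A_2\boldsymbol{x}$ on each interval $[(k-1)T+\frac T2,kT]$, $k=1,2,\dots$; solutions are continuous. The system has a unique $T$-periodic solution $\boldsymbol{x}_p$. *)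

From Stdlib Require Import Reals.
Open Scope R_scope.

Definition right_continuous_at (f : R -> R) (t0 : R) : Prop :=
  forall eps, 0 < eps -> exists delta, 0 < delta /\
    forall t, t0 <= t < t0 + delta -> Rabs (f t - f t0) < eps.

(* (i, v) is a solution on t >= 0 of the switched system
     x' = A1 x + b1  on [kT, kT + T/2],
     x' = A2 x       on [kT + T/2, (k+1)T],  k = 0,1,2,...
   with A1 = [[-R/L, -1/L],[1/C, 0]], A2 = [[-R/L, 1/L],[-1/C, 0]],
   b1 = [Vdc/L, 0], written componentwise. *)
Definition is_switched_solution (R0 L C Vdc T : R) (i v : R -> R) : Prop :=
  (right_continuous_at i 0 /\ right_continuous_at v 0) /\
  (forall t, 0 < t -> continuity_pt i t /\ continuity_pt v t) /\
  (forall (k : nat) t,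
      INR k * T < t < INR k * T + T / 2 ->
      derivable_pt_lim i t (- (R0 / L) * i t - (1 / L) * v t + Vdc / L) /\
      derivable_pt_lim v t ((1 / C) * i t)) /\
  (forall (k : nat) t,
      INR k * T + T / 2 < t < INR k * T + T ->
      derivable_pt_lim i t (- (R0 / L) * i t + (1 / L) * v t) /\
      derivable_pt_lim v t (- (1 / C) * i t)).

Definition is_T_periodic (T : R) (f : R -> R) : Prop :=
  forall t, 0 <= t -> f (t + T) = f t.

(* The half-wave defects a(t) = i(t) - i(t + T/2) and b(t) = v(t) + v(t + T/2) - Vdc of the
   periodic solution obey the unforced RLC equations a' = -(R/L) a - b/L, b' = a/C, whose energy
   L a^2 + C b^2 decreases at rate 2 R a^2.  Periodicity makes a(t + T/2) = -a(t) and
   b(t + T/2) = b(t), so no energy is dissipated over half a period: a vanishes, then so does b,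
   giving v(0) + v(T/2) = Vdc.  Integrating v' = i/C over the charging phase gives
   C (v(T/2) - v(0)), and v(T/2)^2 - v(0)^2 = Vdc (v(T/2) - v(0)) gives the other form. *)

From Coquelicot Require Import Coquelicot.
From Stdlib Require Import Reals Lra.
Open Scope R_scope.

Lemma derivable_pt_lim_shift (f : R -> R) (c x l : R) :
  derivable_pt_lim f (x + c) l -> derivable_pt_lim (fun s => f (s + c)) x l.
Proof.
  intros Hf eps Heps; destruct (Hf eps Heps) as [delta Hdelta].
  exists delta; intros h Hh0 Hh.
  replace (x + h + c) with (x + c + h) by ring; auto.
Qed.

Lemma continuity_pt_shift (f : R -> R) (c x : R) :
  continuity_pt f (x + c) -> continuity_pt (fun s => f (s + c)) x.
Proof.
  intros Hf; change (continuity_pt (comp f (fun s => s + c)) x).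
  apply continuity_pt_comp; [|exact Hf].
  apply derivable_continuous_pt; reg.
Qed.

Lemma locally_open_interval (c d x : R) :
  c < x < d -> locally x (fun y => c < y < d).
Proof. intros Hx; exact (open_and _ _ (open_gt c) (open_lt d) x Hx). Qed.

Lemma derivable_pt_lim_locally_constant (f : R -> R) (a b x l : R) :
  a < x < b -> (forall y, a < y < b -> f y = f x) ->
  derivable_pt_lim f x l -> l = 0.
Proof.
  intros Hx Hconst Hf.
  assert (Hf0 : is_derive f x 0).
  { apply is_derive_ext_loc with (f := fun _ => f x); [|exact (is_derive_const (f x) x)].
    apply (filter_imp (fun y => a < y < b)); [|exact (locally_open_interval a b x Hx)].
    intros y Hy; symmetry; auto. }
  apply is_derive_Reals in Hf0.
  exact (uniqueness_limite f x l 0 Hf Hf0).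
Qed.

Lemma nonpos_derivative_nonincreasing (f df : R -> R) (a b : R) :
  a < b ->
  (forall x, a <= x <= b -> continuity_pt f x) ->
  (forall x, a < x < b -> derivable_pt_lim f x (df x)) ->
  (forall x, a < x < b -> df x <= 0) ->
  f b <= f a.
Proof.
  intros Hab Hcont Hder Hneg.
  destruct (MVT f id a b (fun x Hx => exist _ (df x) (Hder x Hx))
              (fun x _ => derivable_pt_id x) Hab Hcont
              (fun x _ => derivable_continuous_pt _ _ (derivable_pt_id x)))
    as [x [Hx Hmvt]].
  rewrite derive_pt_id in Hmvt; simpl in Hmvt; unfold id in Hmvt.
  specialize (Hneg x Hx); nra.
Qed.

Lemma nonpos_derivative_constant (f df : R -> R) (a b : R) :
  a < b ->
  (forall x, a <= x <= b -> continuity_pt f x) ->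
  (forall x, a < x < b -> derivable_pt_lim f x (df x)) ->
  (forall x, a < x < b -> df x <= 0) ->
  f b = f a ->
  forall x, a < x < b -> f x = f a.
Proof.
  intros Hab Hcont Hder Hneg Hends x Hx.
  apply Rle_antisym.
  - apply (nonpos_derivative_nonincreasing f df a x); try lra;
      intros y Hy; [apply Hcont | apply Hder | apply Hneg]; lra.
  - rewrite <- Hends.
    apply (nonpos_derivative_nonincreasing f df x b); try lra;
      intros y Hy; [apply Hcont | apply Hder | apply Hneg]; lra.
Qed.

(* The integrand is required to be continuous on an open interval around [a, b] so that
   [x |-> RInt f a x] is continuous at the endpoints; F is only differentiable inside. *)
Lemma is_RInt_derivative_interior (f F : R -> R) (a b c d : R) :
  c < a -> a < b -> b < d ->
  (forall x, c < x < d -> continuity_pt f x) ->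
  (forall x, a <= x <= b -> continuity_pt F x) ->
  (forall x, a < x < b -> derivable_pt_lim F x (f x)) ->
  is_RInt f a b (F b - F a).
Proof.
  intros Hca Hab Hbd Hf HFcont HFder.
  assert (Hint : forall x, c < x < d -> is_RInt f a x (RInt f a x)).
  { intros x Hx; apply (@RInt_correct R_CompleteNormedModule).
    apply (@ex_RInt_continuous R_CompleteNormedModule); intros y Hy.
    apply continuity_pt_filterlim, Hf.
    pose proof (Rmin_l a x); pose proof (Rmin_r a x).
    pose proof (Rmax_l a x); pose proof (Rmax_r a x).
    destruct (Rle_dec a x);
      [rewrite Rmin_left, Rmax_right in Hy | rewrite Rmin_right, Rmax_left in Hy]; lra. }
  assert (Hint_loc : forall x, c < x < d ->
            locally x (fun y => is_RInt f a y (RInt f a y))).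
  { intros x Hx; apply (filter_imp (fun y => c < y < d)); [exact Hint|].
    exact (locally_open_interval c d x Hx). }
  set (P x := RInt f a x - F x).
  assert (HPder : forall x, a < x < b -> derivable_pt_lim P x 0).
  { intros x Hx.
    assert (HI : derivable_pt_lim (RInt f a) x (f x)).
    { apply is_derive_Reals, (is_derive_RInt f _ a); [apply Hint_loc; lra|].
      apply continuity_pt_filterlim, Hf; lra. }
    replace 0 with (f x - f x) by ring.
    exact (derivable_pt_lim_minus _ _ x _ _ HI (HFder x Hx)). }
  assert (HPcont : forall x, a <= x <= b -> continuity_pt P x).
  { intros x Hx; apply continuity_pt_minus; [|exact (HFcont x Hx)].
    apply continuity_pt_filterlim.
    apply (@continuous_RInt_1 R_NormedModule f a); apply Hint_loc; lra. }
  pose proof (null_derivative_loc P a b (fun x Hx => exist _ 0 (HPder x Hx)) HPcont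
                (fun x Hx => eq_refl) b ltac:(lra)) as HPb.
  unfold P in HPb; rewrite RInt_point in HPb; unfold zero in HPb; simpl in HPb.
  replace (F b - F a) with (RInt f a b) by lra.
  apply Hint; lra.
Qed.

Lemma is_RInt_periodic_shift (T : R) (f : R -> R) (a b l : R) :
  0 <= a <= b -> is_T_periodic T f ->
  is_RInt f (a + T) (b + T) l -> is_RInt f a b l.
Proof.
  intros Hab Hper Hint.
  replace (a + T) with (1 * a + T) in Hint by ring.
  replace (b + T) with (1 * b + T) in Hint by ring.
  apply (is_RInt_comp_lin f 1 T a b l) in Hint.
  apply (is_RInt_ext (fun y => scal 1 (f (1 * y + T))) f a b l); [|exact Hint].
  intros x Hx; rewrite Rmin_left, Rmax_right in Hx by lra.
  change (1 * f (1 * x + T) = f x).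
  rewrite !Rmult_1_l; apply Hper; lra.
Qed.

Section DampedOscillator.

Variables (R0 L C s0 s1 : R) (a b : R -> R).
Hypotheses (R0_pos : 0 < R0) (L_pos : 0 < L) (C_pos : 0 < C) (s0_lt_s1 : s0 < s1).
Hypothesis a_continuous : forall s, s0 <= s <= s1 -> continuity_pt a s.
Hypothesis b_continuous : forall s, s0 <= s <= s1 -> continuity_pt b s.
Hypothesis a_derivative : forall s, s0 < s < s1 ->
  derivable_pt_lim a s (- (R0 / L) * a s - (1 / L) * b s).
Hypothesis b_derivative : forall s, s0 < s < s1 ->
  derivable_pt_lim b s ((1 / C) * a s).

Definition oscillator_energy (s : R) : R := L * (a s * a s) + C * (b s * b s).

Lemma oscillator_energy_derivative s :
  s0 < s < s1 -> derivable_pt_lim oscillator_energy s (- 2 * R0 * (a s * a s)).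
Proof.
  intros Hs.
  pose proof (derivable_pt_lim_mult _ _ s _ _ (a_derivative s Hs) (a_derivative s Hs)) as Haa.
  pose proof (derivable_pt_lim_mult _ _ s _ _ (b_derivative s Hs) (b_derivative s Hs)) as Hbb.
  pose proof (derivable_pt_lim_plus _ _ s _ _
                (derivable_pt_lim_scal _ L s _ Haa) (derivable_pt_lim_scal _ C s _ Hbb)) as H.
  unfold plus_fct, mult_real_fct, mult_fct in H.
  match type of H with derivable_pt_lim _ _ ?l =>
    replace (- 2 * R0 * (a s * a s)) with l by (field; lra) end.
  exact H.
Qed.

Lemma oscillator_energy_continuous s :
  s0 <= s <= s1 -> continuity_pt oscillator_energy s.
Proof.
  intros Hs; unfold oscillator_energy.
  apply continuity_pt_plus; apply continuity_pt_scal; apply continuity_pt_mult; auto.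
Qed.

Hypothesis energy_periodic : oscillator_energy s1 = oscillator_energy s0.

Lemma oscillator_energy_constant s :
  s0 < s < s1 -> oscillator_energy s = oscillator_energy s0.
Proof.
  apply (nonpos_derivative_constant _ _ s0 s1 s0_lt_s1 oscillator_energy_continuous
           oscillator_energy_derivative); [|exact energy_periodic].
  intros x _; assert (0 <= a x * a x) by nra; nra.
Qed.

Lemma oscillator_current_vanishes s : s0 < s < s1 -> a s = 0.
Proof.
  intros Hs.
  assert (Hconst : forall y, s0 < y < s1 -> oscillator_energy y = oscillator_energy s).
  { intros y Hy; rewrite (oscillator_energy_constant y Hy); symmetry; exact (oscillator_energy_constant s Hs). }
  pose proof (derivable_pt_lim_locally_constant _ s0 s1 s _ Hs Hconst
                (oscillator_energy_derivative s Hs)) as Hdiss.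
  apply Rsqr_0_uniq; unfold Rsqr; nra.
Qed.

Lemma oscillator_at_rest : a s0 = 0 /\ b s0 = 0.
Proof.
  set (m := (s0 + s1) / 2).
  assert (Hm : s0 < m < s1) by (unfold m; lra).
  assert (Ham : a m = 0) by exact (oscillator_current_vanishes m Hm).
  assert (Hbm : b m = 0).
  { assert (Hda : - (R0 / L) * a m - (1 / L) * b m = 0).
    { apply (derivable_pt_lim_locally_constant a s0 s1 m); auto.
      intros y Hy; rewrite Ham; apply oscillator_current_vanishes; exact Hy. }
    rewrite Ham in Hda.
    replace (b m) with (- L * (- (R0 / L) * 0 - (1 / L) * b m)) by (field; lra).
    rewrite Hda; ring. }
  assert (Hzero : oscillator_energy s0 = 0).
  { rewrite <- (oscillator_energy_constant m Hm).
    unfold oscillator_energy; rewrite Ham, Hbm; ring. }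
  unfold oscillator_energy in Hzero.
  assert (0 <= a s0 * a s0) by nra; assert (0 <= b s0 * b s0) by nra.
  split; apply Rsqr_0_uniq; unfold Rsqr; nra.
Qed.

End DampedOscillator.

Definition half_wave_current_defect (T : R) (i : R -> R) (s : R) : R :=
  i s - i (s + T / 2).

Definition half_wave_voltage_defect (Vdc T : R) (v : R -> R) (s : R) : R :=
  v s + v (s + T / 2) - Vdc.

Lemma periodic_second_cycle (T : R) (f : R -> R) :
  0 < T -> is_T_periodic T f ->
  f T = f 0 /\ f (T + T / 2) = f (T / 2) /\ f (T + T / 2 + T / 2) = f 0.
Proof.
  intros HT Hf; split; [|split].
  - rewrite <- (Hf 0) by lra; f_equal; ring.
  - rewrite <- (Hf (T / 2)) by lra; f_equal; ring.
  - rewrite <- (Hf 0), <- (Hf (0 + T)) by lra; f_equal; field.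
Qed.

Section SwitchedSolution.

Variables (R0 L C Vdc T : R) (ip vp : R -> R).
Hypotheses (R0_pos : 0 < R0) (L_pos : 0 < L) (C_pos : 0 < C) (T_pos : 0 < T).
Hypothesis solution : is_switched_solution R0 L C Vdc T ip vp.

Lemma switched_continuous t : 0 < t -> continuity_pt ip t /\ continuity_pt vp t.
Proof. apply solution. Qed.

(* The defects are taken on the second cycle [T, T + T/2], away from the instant 0 where the
   solution is only right-continuous. *)
Lemma switched_charging_derivatives s : T < s < T + T / 2 ->
  derivable_pt_lim ip s (- (R0 / L) * ip s - (1 / L) * vp s + Vdc / L) /\
  derivable_pt_lim vp s ((1 / C) * ip s).
Proof.
  intros Hs; destruct solution as (_ & _ & Hcharge & _).
  apply (Hcharge 1%nat); rewrite INR_1; lra.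
Qed.

Lemma switched_discharging_derivatives_shifted s : T < s < T + T / 2 ->
  derivable_pt_lim (fun u => ip (u + T / 2)) s
    (- (R0 / L) * ip (s + T / 2) + (1 / L) * vp (s + T / 2)) /\
  derivable_pt_lim (fun u => vp (u + T / 2)) s (- (1 / C) * ip (s + T / 2)).
Proof.
  intros Hs; destruct solution as (_ & _ & _ & Hdischarge).
  destruct (Hdischarge 1%nat (s + T / 2)) as [Hi Hv]; [rewrite INR_1; lra|].
  split; apply derivable_pt_lim_shift; assumption.
Qed.

Lemma current_defect_derivative s : T < s < T + T / 2 ->
  derivable_pt_lim (half_wave_current_defect T ip) s
    (- (R0 / L) * half_wave_current_defect T ip s
     - (1 / L) * half_wave_voltage_defect Vdc T vp s).
Proof.
  intros Hs.
  destruct (switched_charging_derivatives s Hs) as [Hi _].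
  destruct (switched_discharging_derivatives_shifted s Hs) as [Hi' _].
  pose proof (derivable_pt_lim_minus _ _ s _ _ Hi Hi') as H; unfold minus_fct in H.
  unfold half_wave_current_defect, half_wave_voltage_defect.
  match type of H with derivable_pt_lim _ _ ?l => replace (_ - _) with l by (field; lra) end.
  exact H.
Qed.

Lemma voltage_defect_derivative s : T < s < T + T / 2 ->
  derivable_pt_lim (half_wave_voltage_defect Vdc T vp) s
    ((1 / C) * half_wave_current_defect T ip s).
Proof.
  intros Hs.
  destruct (switched_charging_derivatives s Hs) as [_ Hv].
  destruct (switched_discharging_derivatives_shifted s Hs) as [_ Hv'].
  pose proof (derivable_pt_lim_minus _ _ s _ _ (derivable_pt_lim_plus _ _ s _ _ Hv Hv')
                (derivable_pt_lim_const Vdc s)) as H.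
  unfold minus_fct, plus_fct in H.
  unfold half_wave_current_defect, half_wave_voltage_defect.
  match type of H with derivable_pt_lim _ _ ?l => replace (_ * _) with l by (field; lra) end.
  exact H.
Qed.

Lemma current_defect_continuous s : 0 < s -> continuity_pt (half_wave_current_defect T ip) s.
Proof.
  intros Hs; apply continuity_pt_minus.
  - apply switched_continuous; lra.
  - apply continuity_pt_shift, switched_continuous; lra.
Qed.

Lemma voltage_defect_continuous s :
  0 < s -> continuity_pt (half_wave_voltage_defect Vdc T vp) s.
Proof.
  intros Hs; apply continuity_pt_minus; [apply continuity_pt_plus|apply continuity_pt_const].
  - apply switched_continuous; lra.
  - apply continuity_pt_shift, switched_continuous; lra.
  - intros ? ?; reflexivity.
Qed.

Hypotheses (ip_periodic : is_T_periodic T ip) (vp_periodic : is_T_periodic T vp).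

Lemma defect_energy_periodic :
  oscillator_energy L C (half_wave_current_defect T ip) (half_wave_voltage_defect Vdc T vp)
    (T + T / 2) =
  oscillator_energy L C (half_wave_current_defect T ip) (half_wave_voltage_defect Vdc T vp) T.
Proof.
  destruct (periodic_second_cycle T ip T_pos ip_periodic) as (Hi0 & Hi1 & Hi2).
  destruct (periodic_second_cycle T vp T_pos vp_periodic) as (Hv0 & Hv1 & Hv2).
  unfold oscillator_energy, half_wave_current_defect, half_wave_voltage_defect.
  rewrite Hi0, Hi1, Hi2, Hv0, Hv1, Hv2; ring.
Qed.

Lemma switched_voltage_half_wave_sum : vp 0 + vp (T / 2) = Vdc.
Proof.
  destruct (oscillator_at_rest R0 L C T (T + T / 2) _ _ R0_pos L_pos C_pos ltac:(lra)
              (fun s Hs => current_defect_continuous s ltac:(lra))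
              (fun s Hs => voltage_defect_continuous s ltac:(lra))
              current_defect_derivative voltage_defect_derivative defect_energy_periodic)
    as [_ Hrest].
  destruct (periodic_second_cycle T vp T_pos vp_periodic) as (Hv0 & Hv1 & _).
  unfold half_wave_voltage_defect in Hrest; lra.
Qed.

Lemma switched_current_charging_integral : is_RInt ip 0 (T / 2) (C * (vp (T / 2) - vp 0)).
Proof.
  destruct (periodic_second_cycle T vp T_pos vp_periodic) as (Hv0 & Hv1 & _).
  apply (is_RInt_periodic_shift T); [lra | exact ip_periodic |].
  replace (C * (vp (T / 2) - vp 0)) with (C * vp (T / 2 + T) - C * vp (0 + T))
    by (rewrite Rplus_0_l, Rplus_comm, Hv0, Hv1; ring).
  apply (is_RInt_derivative_interior ip (fun t => C * vp t) _ _ (T / 2) (2 * T)); try lra.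
  - intros x Hx; apply switched_continuous; lra.
  - intros x Hx; apply continuity_pt_scal, switched_continuous; lra.
  - intros x Hx.
    destruct (switched_charging_derivatives x ltac:(lra)) as [_ Hv].
    replace (ip x) with (C * ((1 / C) * ip x)) by (field; lra).
    exact (derivable_pt_lim_scal _ C x _ Hv).
Qed.

End SwitchedSolution.

Theorem mainTheorem5 (R0 L C Vdc T : R) (ip vp : R -> R) :
  0 < R0 -> 0 < L -> 0 < C -> 0 < Vdc -> 0 < T ->
  is_switched_solution R0 L C Vdc T ip vp ->
  is_T_periodic T ip -> is_T_periodic T vp ->
  (exists pr : Riemann_integrable ip 0 (T / 2),
      RiemannInt pr = C / Vdc * (vp (T / 2) ^ 2 - vp 0 ^ 2) /\
      RiemannInt pr = C * (vp (T / 2) - vp 0)) /\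
  vp 0 + vp (T / 2) = Vdc.
Proof.
  intros HR HL HC HV HT Hsol Hip Hvp.
  pose proof (switched_voltage_half_wave_sum R0 L C Vdc T ip vp HR HL HC HT Hsol Hip Hvp)
    as Hsum.
  pose proof (switched_current_charging_integral R0 L C Vdc T ip vp HC HT Hsol Hip Hvp)
    as Hint.
  split; [|exact Hsum].
  exists (ex_RInt_Reals_0 _ _ _ (ex_intro _ _ Hint)).
  rewrite <- RInt_Reals, (is_RInt_unique _ _ _ _ Hint).
  split; [|reflexivity].
  replace (vp (T / 2) ^ 2 - vp 0 ^ 2) with ((vp (T / 2) - vp 0) * (vp 0 + vp (T / 2)))
    by ring.
  rewrite Hsum; field; lra.
Qed.
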